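(* Let $M$ be a closed, connected, oriented smooth $4m$-manifold and $\Phi\colon H^*(M;\mathbb R)\to\wedge^*\mathbb R^{4m}$ an injective homomorphism of graded algebras (cup product to exterior product) whose image is closed under the Euclidean Clifford product $\cdot$ of $\wedge^*\mathbb R^{4m}$. Let $\Lambda_{2m}=\Phi(H^{2m}(M;\mathbb R))$. Then $\Lambda_{2m}$ is closed under the Hodge star $*$ of $\wedge^{2m}\mathbb R^{4m}$, so $\Lambda_{2m}=\Lambda^+_{2m}\oplus\Lambda^-_{2m}$ with $\Lambda^\pm_{2m}$ the $\pm1$-eigenspaces of $*$ in $\Lambda_{2m}$; and the map $P\colon\wedge^{2m}\mathbb R^{4m}\times\wedge^{2m}\mathbb R^{4m}\to\wedge^{2m}\mathbb R^{4m}$, $P(v,v')=\langle v\cdot v'\rangle_{2m}$, satisfies $P(\Lambda^+_{2m}\times\Lambda^+_{2m})\subset\Lambda^+_{2m}$ and $P(\Lambda^-_{2m}\times\Lambda^-_{2m})\subset\Lambda^-_{2m}$.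
   Context: The Euclidean Clifford product on $\wedge^*\mathbb R^{N}$: the Clifford algebra of $(\mathbb R^N,\text{standard inner product})$ identified with $\wedge^*\mathbb R^N$ via $e_{i_1}\cdots e_{i_k}\leftrightarrow e_{i_1}\wedge\dots\wedge e_{i_k}$ ($i_1<\dots<i_k$), with $e_i\cdot e_i=1$ and $e_i\cdot e_j=-e_j\cdot e_i$ for $i\ne j$. $\langle\xi\rangle_k$ denotes the degree-$k$ component. *)

From HB Require Import structures.
From mathcomp Require Import all_boot all_order all_algebra.
From mathcomp Require Import reals.
Set Implicit Arguments. Unset Strict Implicit. Unset Printing Implicit Defensive.
Import Order.TTheory GRing.Theory Num.Theory.
Local Open Scope ring_scope.

(* The exterior algebra  /\^* R^N, as coefficient functions on the basis
   e_S = e_{i_1} /\ ... /\ e_{i_k}, S = {i_1 < ... < i_k} a subset of 'I_N. *)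
Notation Ext R N := {ffun {set 'I_N} -> R^o}.

Definition esign (R : realType) (N : nat) (S T : {set 'I_N}) : R :=
  (-1) ^+ #|[set p : 'I_N * 'I_N | [&& p.1 \in S, p.2 \in T & (p.2 < p.1)%N]]|.

Definition ext1 (R : realType) (N : nat) : Ext R N :=
  [ffun U : {set 'I_N} => (U == set0)%:R].

Definition wedge (R : realType) (N : nat) (x y : Ext R N) : Ext R N :=
  [ffun U : {set 'I_N} => \sum_(S : {set 'I_N}) \sum_(T : {set 'I_N})
      if (S :&: T == set0) && (S :|: T == U) then esign R S T * x S * y T else 0].

(* Euclidean Clifford product (e_i e_i = 1, e_i e_j = - e_j e_i):
   e_S . e_T = esign S T e_{S symdiff T} *)
Definition clif (R : realType) (N : nat) (x y : Ext R N) : Ext R N :=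
  [ffun U : {set 'I_N} => \sum_(S : {set 'I_N}) \sum_(T : {set 'I_N})
      if (S :\: T) :|: (T :\: S) == U then esign R S T * x S * y T else 0].

Definition grade (R : realType) (N : nat) (k : nat) (x : Ext R N) : Ext R N :=
  [ffun S : {set 'I_N} => if #|S| == k then x S else 0].

(* Hodge star for the standard inner product and orientation e_1/\.../\e_N:
   * e_S = esign S S^c e_{S^c}  (so that e_S /\ * e_S = e_1 /\ ... /\ e_N) *)
Definition hodge (R : realType) (N : nat) (x : Ext R N) : Ext R N :=
  [ffun U : {set 'I_N} => esign R (~: U) U * x (~: U)].

Definition Pprod (R : realType) (N : nat) (k : nat) (v w : Ext R N) : Ext R N :=
  grade k (clif v w).

(* Lambda_k = Phi (H^k), where H^k is the range of the degree-k projection *)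
Definition Lam (R : realType) (N : nat) (H : Type) (Phi : H -> Ext R N)
  (deg : nat -> H -> H) (k : nat) (v : Ext R N) : Prop :=
  exists h : H, v = Phi (deg k h).

From HB Require Import structures.
From mathcomp Require Import all_boot all_order all_algebra.
From mathcomp Require Import reals.
From mathcomp Require Import zify ring.
Import Order.TTheory GRing.Theory Num.Theory.
Local Open Scope ring_scope.
Set Implicit Arguments. Unset Strict Implicit.

(* Proof of lemma7p5.  Everything happens in the basis e_S of /\^* R^N, where
   every sign is (-1)^(number of inversions between two index sets).

   1. Inversion counts: additivity under disjoint unions, the swap identity
      inv(A,B) + inv(B,A) = |A||B| and inv(A,A) = C(|A|,2).  From these we get
      the sign identities behind the Hodge star.
   2. For a top-degree element z (supported on e_{1..N}) and a homogeneous v of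
      degree k, the Hodge star is a Clifford multiplication:
      *v = (-1)^C(k,2) / z_top . (v . z).  Hence, when N = 2k, the image
      Lambda_k of an injective graded map Phi whose image is Clifford-closed
      is stable under *, since Phi(H^N) contains such a z.
   3. In the middle degree of R^{4m}, ** = 1 (so Lambda_{2m} splits into the
      eigenspaces of the star), and * commutes with P in the first slot:
      *<v.w>_{2m} = <( *v).w>_{2m}.  Thus P maps self-dual (anti-self-dual)
      pairs to self-dual (anti-self-dual) elements. *)

Ltac set_by_cases S T :=
  let i := fresh "i" in apply/setP => i; rewrite !inE; case: (i \in S); case: (i \in T).
Ltac disjoint_by_cases S T := rewrite -setI_eq0; apply/eqP; set_by_cases S T.

Lemma cardsUd N (A B : {set 'I_N}) : [disjoint A & B] -> #|A :|: B| = (#|A| + #|B|)%N.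
Proof. by move=> dAB; apply/eqP; rewrite (leq_card_setU A B).2. Qed.

Lemma scale_regular (R : pzSemiRingType) (a b : R) : a *: (b : R^o) = a * b.
Proof. by []. Qed.

Lemma sign_parity (R : pzRingType) (a b y z : nat) :
  (a + 2 * y = b + 2 * z)%N -> (-1 : R) ^+ a = (-1) ^+ b.
Proof.
move=> h; rewrite -[LHS]signr_odd -[RHS]signr_odd.
by move: (congr1 odd h); rewrite !mul2n !oddD !odd_double !addbF => ->.
Qed.

Section Inversions.

Variable N : nat.
Implicit Types A B C : {set 'I_N}.

Definition ninv A B : nat :=
  #|[set p : 'I_N * 'I_N | [&& p.1 \in A, p.2 \in B & (p.2 < p.1)%N]]|.

Lemma esignE (R : realType) A B : esign R A B = (-1) ^+ ninv A B.
Proof. by []. Qed.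

Lemma ninv_sum A B : ninv A B = (\sum_(i in A) \sum_(j in B) (j < i))%N.
Proof.
rewrite /ninv -sum1_card pair_big_dep /= big_mkcond [RHS]big_mkcond.
apply: eq_bigr => -[i j] _ /=; rewrite !inE /=.
by case: (i \in A); case: (j \in B); case: (j < i)%N.
Qed.

Lemma sum_setUd A B (F : 'I_N -> nat) : [disjoint A & B] ->
  (\sum_(i in A :|: B) F i = \sum_(i in A) F i + \sum_(i in B) F i)%N.
Proof. by move=> dAB; rewrite -bigU //; apply: eq_bigl => i; rewrite !inE. Qed.

Lemma ninvUl A B C : [disjoint A & B] -> ninv (A :|: B) C = (ninv A C + ninv B C)%N.
Proof. by move=> dAB; rewrite !ninv_sum sum_setUd. Qed.

Lemma ninvUr A B C : [disjoint B & C] -> ninv A (B :|: C) = (ninv A B + ninv A C)%N.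
Proof.
by move=> dBC; rewrite !ninv_sum -big_split /=; apply: eq_bigr => i _; rewrite sum_setUd.
Qed.

(* each pair of distinct indices is an inversion in exactly one direction *)
Lemma ninv_swap A B : [disjoint A & B] -> (ninv A B + ninv B A = #|A| * #|B|)%N.
Proof.
move=> dAB; rewrite !ninv_sum [X in (_ + X)%N]exchange_big -big_split /=.
rewrite -sum1_card big_distrl /=; apply: eq_bigr => i iA.
rewrite -big_split /= mul1n -sum1_card; apply: eq_bigr => j jB.
have : val i != val j.
  by apply/eqP => /val_inj eij; move/disjointFr: dAB => /(_ i iA); rewrite eij jB.
by case: ltngtP; rewrite ?eqxx.
Qed.

Lemma ninv_diag A : (ninv A A * 2 + #|A| = #|A| * #|A|)%N.
Proof.
rewrite !ninv_sum muln2 -addnn {2}exchange_big -!big_split /=.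
rewrite -sum1_card -big_split big_distrl /=; apply: eq_bigr => i iA.
rewrite mul1n -big_split /= (bigD1 i) //= [in RHS](bigD1 i) //= ltnn addn0 add0n addnC.
congr (_ + _)%N; apply: eq_bigr => j /andP[jA ji].
have : val i != val j by apply: contra ji => /eqP/val_inj ->.
by case: ltngtP; rewrite ?eqxx.
Qed.

Lemma ninv_diag_bin A : ninv A A = 'C(#|A|, 2).
Proof.
have h := ninv_diag A; rewrite bin2.
have -> : (#|A| * #|A|.-1 = (ninv A A).*2)%N by move: h; case: #|A| => [|n] /= h; nia.
by rewrite doubleK.
Qed.

End Inversions.

Section SignIdentities.

Variables (R : realType) (N : nat).
Implicit Types A B : {set 'I_N}.

Lemma esign_swap A B : [disjoint A & B] ->
  esign R A B * esign R B A = (-1) ^+ (#|A| * #|B|).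
Proof. by move=> dAB; rewrite !esignE -exprD ninv_swap. Qed.

(* the sign relating e_A /\ e_{A^c} to the left Clifford action of e_A
   on the volume element e_{1..N} *)
Lemma esign_compl A : esign R A (~: A) = (-1) ^+ 'C(#|A|, 2) * esign R A setT.
Proof.
have -> : [set: 'I_N] = A :|: ~: A by rewrite setUCr.
have dA : [disjoint A & ~: A] by rewrite -setI_eq0 setICr.
by rewrite [in RHS]esignE ninvUr // exprD ninv_diag_bin signrMK.
Qed.

End SignIdentities.

(* It is
   checked by splitting 'I_{4m} into a = S\T, b = S/\T, c = T\S, d = rest,
   which forces |a| = |b| = |c| = |d| = m. *)
Lemma esign_hodge_clif (R : realType) (m : nat) (S T : {set 'I_(4 * m)}) :
  #|S| = (2 * m)%N -> #|T| = (2 * m)%N -> #|(S :\: T) :|: (T :\: S)| = (2 * m)%N ->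
  esign R ((S :\: T) :|: (T :\: S)) (~: ((S :\: T) :|: (T :\: S))) * esign R S T
  = esign R (~: S) T * esign R S (~: S).
Proof.
move=> cS cT cST.
pose a := S :\: T; pose b := S :&: T; pose c := T :\: S; pose d := ~: (S :|: T).
have eST : (S :\: T) :|: (T :\: S) = a :|: c by [].
have eSTc : ~: (a :|: c) = b :|: d by set_by_cases S T.
have eSc : ~: S = c :|: d by set_by_cases S T.
have eS : S = a :|: b by set_by_cases S T.
have eT : T = b :|: c by set_by_cases S T.
have dab : [disjoint a & b] by disjoint_by_cases S T.
have dac : [disjoint a & c] by disjoint_by_cases S T.
have dbc : [disjoint b & c] by disjoint_by_cases S T.
have dbd : [disjoint b & d] by disjoint_by_cases S T.
have dcd : [disjoint c & d] by disjoint_by_cases S T.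
have cab : (#|a| + #|b| = 2 * m)%N by rewrite -cardsUd // -eS.
have cbc : (#|b| + #|c| = 2 * m)%N by rewrite -cardsUd // -eT.
have cac : (#|a| + #|c| = 2 * m)%N by rewrite -cardsUd // -eST.
have ccd : (#|c| + #|d| = 2 * m)%N.
  by rewrite -cardsUd // -eSc; have := cardsC S; rewrite card_ord cS; lia.
move: (ninv_swap dbd) (ninv_swap dcd) (ninv_diag b) (ninv_diag c).
have [-> -> ->] : [/\ #|b| = m, #|c| = m & #|d| = m] by split; lia.
move=> swap_bd swap_cd diag_b diag_c.
rewrite eST eSTc eSc eS eT !esignE -!exprD !ninvUl // !ninvUr //.
by apply: (@sign_parity _ _ _ (m * m) (ninv a b + ninv c d)); lia.
Qed.

Definition homogeneous (R : realType) (N k : nat) (v : Ext R N) : Prop :=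
  forall S : {set 'I_N}, #|S| != k -> v S = 0.

Section Hodge.

Variables (R : realType) (N : nat).
Implicit Types v w z : Ext R N.

Lemma grade_homogeneous k v : homogeneous k (grade k v).
Proof. by move=> S /negbTE h; rewrite ffunE h. Qed.

Lemma homogeneous_grade k v : homogeneous k v -> grade k v = v.
Proof. by move=> hv; apply/ffunP => S; rewrite ffunE; case: eqP => // /eqP /hv ->. Qed.

Lemma hodgeD v w : hodge (v + w) = hodge v + hodge w.
Proof. by apply/ffunP => U; rewrite !ffunE mulrDr. Qed.

Lemma hodgeB v w : hodge (v - w) = hodge v - hodge w.
Proof. by apply/ffunP => U; rewrite !ffunE mulrBr. Qed.

Lemma hodgeZ (a : R) v : hodge (a *: v) = a *: hodge v.
Proof. by apply/ffunP => U; rewrite !ffunE /= mulrCA. Qed.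

Lemma hodge_homogeneous k v : homogeneous k v -> homogeneous (N - k) (hodge v).
Proof.
move=> hv U cU; rewrite ffunE hv ?mulr0 //.
by apply: contra cU => /eqP cUc; have := cardsC U; rewrite card_ord -cUc; lia.
Qed.

Lemma hodge_invol k v : homogeneous k v -> hodge (hodge v) = (-1) ^+ (k * (N - k)) *: v.
Proof.
move=> hv; apply/ffunP => U; rewrite !ffunE setCK /= mulrA.
have [cU|/hv ->] := eqVneq #|U| k; last by rewrite mulr0 scaler0.
have dU : [disjoint ~: U & U] by rewrite -setI_eq0 setIC setICr.
rewrite esign_swap // mulnC -cU; congr (_ ^+ (_ * _) * _).
by have := cardsC U; rewrite card_ord; lia.
Qed.

Lemma hodge_split v : hodge (hodge v) = v ->
  [/\ hodge (2^-1 *: (v + hodge v)) = 2^-1 *: (v + hodge v),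
      hodge (2^-1 *: (v - hodge v)) = - (2^-1 *: (v - hodge v)) &
      v = 2^-1 *: (v + hodge v) + 2^-1 *: (v - hodge v)].
Proof.
move=> hh; split.
- by rewrite hodgeZ hodgeD hh addrC.
- by rewrite hodgeZ hodgeB hh -scalerN opprB.
- by rewrite -scalerDr addrACA subrr addr0 -mulr2n -scaler_nat scalerA mulVf ?scale1r ?pnatr_eq0.
Qed.

Lemma clif_top v z : (forall T, T != setT -> z T = 0) ->
  forall U, clif v z U = esign R (~: U) setT * v (~: U) * z setT.
Proof.
move=> hz U.
have row S : \sum_(T : {set 'I_N})
    (if (S :\: T) :|: (T :\: S) == U then esign R S T * v S * z T else 0) =
    if ~: S == U then esign R S setT * v S * z setT else 0.
  rewrite (bigD1 setT) //= big1 ?addr0; last by move=> T hT; rewrite hz // mulr0 if_same.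
  by rewrite setDT set0U setTD.
rewrite ffunE; under eq_bigr do rewrite row.
rewrite (bigD1 (~: U)) //= setCK eqxx big1 ?addr0 // => S hS.
by rewrite ifF //; apply: contraNF hS => /eqP <-; rewrite setCK.
Qed.

Lemma hodge_clif_top k v z : homogeneous k v ->
  (forall T, T != setT -> z T = 0) -> z setT != 0 ->
  hodge v = ((-1) ^+ 'C(k, 2) / z setT) *: clif v z.
Proof.
move=> hv hz nz; apply/ffunP => U; rewrite [LHS]ffunE [RHS]ffunE clif_top //=.
have [cU|/hv ->] := eqVneq #|~: U| k; last by rewrite !(mulr0, mul0r, scaler0).
have := esign_compl R (~: U); rewrite setCK cU => ->.
by rewrite scale_regular; field.
Qed.

Lemma PprodNl k v w : Pprod k (- v) w = - Pprod k v w.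
Proof.
apply/ffunP => U; rewrite !ffunE; case: eqP => _; last by rewrite oppr0.
rewrite -sumrN; apply: eq_bigr => S _; rewrite -sumrN; apply: eq_bigr => T _.
by rewrite !ffunE; case: ifP; rewrite ?oppr0 // mulrN mulNr.
Qed.

End Hodge.

Section MiddleDegree.

Variables (R : realType) (m : nat).
Implicit Types v w : Ext R (4 * m).

Lemma hodge_invol_mid v : homogeneous (2 * m) v -> hodge (hodge v) = v.
Proof.
by move=> hv; rewrite (hodge_invol hv) -signr_odd -mulnA mul2n odd_double expr0 scale1r.
Qed.

Lemma cardC_mid (U : {set 'I_(4 * m)}) : (#|~: U| == 2 * m)%N = (#|U| == 2 * m)%N.
Proof. by have := cardsC U; rewrite card_ord => h; apply/eqP/eqP; lia. Qed.

(* the Hodge star commutes with P in the first argument: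
   *<v.w>_{2m} = <( *v).w>_{2m}; this reduces to esign_hodge_clif termwise *)
Lemma hodge_Pprod v w : homogeneous (2 * m) v -> homogeneous (2 * m) w ->
  hodge (Pprod (2 * m) v w) = Pprod (2 * m) (hodge v) w.
Proof.
move=> hv hw; apply/ffunP => U; rewrite /Pprod [LHS]ffunE !ffunE cardC_mid.
have [cU|_] := eqVneq #|U| (2 * m)%N; last by rewrite mulr0.
rewrite [RHS](reindex_inj (@setC_inj _)) big_distrr; apply: eq_bigr => S _.
rewrite big_distrr; apply: eq_bigr => T _ /=.
have -> : ((~: S :\: T) :|: (T :\: ~: S) == U) = ((S :\: T) :|: (T :\: S) == ~: U).
  rewrite (_ : (~: S :\: T) :|: (T :\: ~: S) = ~: ((S :\: T) :|: (T :\: S))).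
    by apply/eqP/eqP => [<-|->]; rewrite setCK.
  by set_by_cases S T.
have [eU|_] := eqVneq ((S :\: T) :|: (T :\: S)) (~: U); last by rewrite mulr0.
rewrite !ffunE setCK.
have [cS|/hv ->] := eqVneq #|S| (2 * m)%N; last by rewrite !(mulr0, mul0r).
have [cT|/hw ->] := eqVneq #|T| (2 * m)%N; last by rewrite !(mulr0, mul0r).
have cST : #|(S :\: T) :|: (T :\: S)| = (2 * m)%N by rewrite eU; apply/eqP; rewrite cardC_mid cU.
by rewrite -[U]setCK -eU setCK !mulrA esign_hodge_clif.
Qed.

End MiddleDegree.

Section CliffordClosedImage.

Variables (R : realType) (N : nat) (H : lmodType R).
Variables (deg : nat -> {linear H -> H}) (Phi : {linear H -> Ext R N}).
Hypothesis Phi_inj : injective Phi.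
Hypothesis PhiG : forall (k : nat) (x : H), Phi (deg k x) = grade k (Phi x).
Hypothesis Hcl : forall x y : H, exists z : H, Phi z = clif (Phi x) (Phi y).

Variable k : nat.
Local Notation L := (Lam Phi (fun j => deg j) k).

Lemma Lam_homogeneous v : L v -> homogeneous k v.
Proof. by move=> [h ->]; rewrite PhiG; apply: grade_homogeneous. Qed.

Lemma LamD v w : L v -> L w -> L (v + w).
Proof. by move=> [h1 ->] [h2 ->]; exists (h1 + h2); rewrite !linearD. Qed.

Lemma LamZ (a : R) v : L v -> L (a *: v).
Proof. by move=> [h ->]; exists (a *: h); rewrite !linearZ. Qed.

Lemma LamB v w : L v -> L w -> L (v - w).
Proof. by move=> Lv Lw; rewrite -scaleN1r; apply: LamD => //; apply: LamZ. Qed.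

Lemma Lam_Pprod v w : L v -> L w -> L (Pprod k v w).
Proof.
move=> [h1 ->] [h2 ->]; have [z hz] := Hcl (deg k h1) (deg k h2).
by exists z; rewrite [RHS]PhiG hz.
Qed.

Lemma top_support mu : deg N mu = mu -> forall T, T != setT -> Phi mu T = 0.
Proof.
move=> dmu T hT; rewrite -dmu PhiG ffunE ifF //; apply: contraNF hT => /eqP cT.
by rewrite eqEcard subsetT cardsT card_ord cT leqnn.
Qed.

Lemma top_coef_neq0 mu : deg N mu = mu -> mu != 0 -> Phi mu setT != 0.
Proof.
move=> dmu; apply: contra_neq => z0; apply: Phi_inj; rewrite linear0.
apply/ffunP => T; rewrite ffunE; have [->|hT] := eqVneq T setT; first by [].
exact: top_support.
Qed.

(* in the middle degree, *v is a multiple of v . Phi(mu), hence in the image *)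
Lemma Lam_hodge mu : (N - k)%N = k -> deg N mu = mu -> mu != 0 ->
  forall v, L v -> L (hodge v).
Proof.
move=> mid dmu nmu v Lv; have hv := Lam_homogeneous Lv; case: Lv => h vE.
have [y hy] := Hcl (deg k h) mu.
exists (((-1) ^+ 'C(k, 2) / Phi mu setT) *: y).
rewrite PhiG linearZ /= hy -vE -(hodge_clif_top hv (top_support dmu) (top_coef_neq0 dmu nmu)).
by rewrite homogeneous_grade // -{1}mid; apply: hodge_homogeneous.
Qed.

End CliffordClosedImage.

Theorem lemma7p5 (R : realType) (m : nat) (H : algType R)
  (* H = H^*(M;R), a graded algebra with degree projections deg k : H -> H^k *)
  (deg : nat -> {linear H -> H})
  (deg_proj : forall (j k : nat) (x : H),
      deg j (deg k x) = if j == k then deg k x else 0)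
  (deg_sum : forall x : H, x = \sum_(k < (4 * m).+1) deg k x)
  (deg_mul : forall (j k : nat) (x y : H),
      deg (j + k)%N (deg j x * deg k y) = deg j x * deg k y)
  (deg_comm : forall (j k : nat) (x y : H),
      deg j x * deg k y = ((-1) ^+ (j * k) : R) *: (deg k y * deg j x))
  (* M connected: H^0 = R *)
  (H0 : forall x : H, exists c : R, deg 0%N x = c *: 1)
  (* M closed, connected, oriented 4m-manifold: H^{4m} = R *)
  (Htop : exists mu : H, [/\ deg (4 * m)%N mu = mu, mu != 0 &
      forall x : H, exists c : R, deg (4 * m)%N x = c *: mu])
  (* Poincare duality: the cup-product pairing H^k x H^{4m-k} -> H^{4m} is nondegenerate *)
  (PD : forall (k : nat) (x : H), (k <= 4 * m)%N -> deg k x != 0 ->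
      exists y : H, deg k x * deg (4 * m - k)%N y != 0)
  (* Phi : injective homomorphism of graded algebras into /\^* R^{4m} *)
  (Phi : {linear H -> Ext R (4 * m)})
  (Phi_inj : injective Phi)
  (Phi1 : Phi 1 = ext1 R (4 * m))
  (PhiM : forall x y : H, Phi (x * y) = wedge (Phi x) (Phi y))
  (PhiG : forall (k : nat) (x : H), Phi (deg k x) = grade k (Phi x))
  (* image of Phi closed under the Euclidean Clifford product *)
  (Hcl : forall x y : H, exists z : H, Phi z = clif (Phi x) (Phi y)) :
  let L := Lam Phi (fun k => deg k) (2 * m) in
  [/\ (forall v, L v -> L (hodge v)),
      (forall v, L v -> exists vp vm, [/\ L vp, L vm, hodge vp = vp,
                   hodge vm = - vm & v = vp + vm]),
      (forall v w, L v -> L w -> hodge v = v -> hodge w = w ->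
         L (Pprod (2 * m) v w) /\ hodge (Pprod (2 * m) v w) = Pprod (2 * m) v w) &
      (forall v w, L v -> L w -> hodge v = - v -> hodge w = - w ->
         L (Pprod (2 * m) v w) /\ hodge (Pprod (2 * m) v w) = - Pprod (2 * m) v w)].
Proof.
move=> L.
have [mu [dmu nmu _]] := Htop.
have mid : (4 * m - 2 * m = 2 * m)%N by lia.
have Lh : forall v, L v -> L (hodge v) := Lam_hodge Phi_inj PhiG Hcl mid dmu nmu.
have Lhom : forall v, L v -> homogeneous (2 * m) v := Lam_homogeneous PhiG (k := (2 * m)%N).
split.
- exact: Lh.
- move=> v Lv; have [hp hm ->] := hodge_split (hodge_invol_mid (Lhom v Lv)).
  exists (2^-1 *: (v + hodge v)), (2^-1 *: (v - hodge v)).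
  by split=> //; apply: LamZ; [apply: LamD | apply: LamB] => //; apply: Lh.
- move=> v w Lv Lw hv _; split; first exact: Lam_Pprod.
  by rewrite hodge_Pprod ?hv //; apply: Lhom.
- move=> v w Lv Lw hv _; split; first exact: Lam_Pprod.
  by rewrite hodge_Pprod ?hv ?PprodNl //; apply: Lhom.
Qed.
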